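(* Let $m\ge2$ and $n\ge m$. For every $\epsilon$ with $0<\epsilon\le 1/2$, there is no proportional mechanism $(A,p)$ for the job scheduling problem over the set $\mathcal{C}$ of general instances with $m$ machines and $n$ jobs such that $A$ gives a $(3/2-\epsilon)$-approximation to the optimal makespan.
   Context: Notation: $[k]=\{1,\dots,k\}$. There are $m$ machines $[m]$ and $n$ jobs $[n]$. An instance is a matrix $c\in\mathbb{R}_{\ge0}^{m\times n}$; for $S\subseteq[n]$, $c_i(S)=\sum_{j\in S}c_{i,j}$. The set of general instances is $\mathcal{C}=\mathbb{R}_{\ge0}^{m\times n}$. An allocation is a tuple $(X_1,\dots,X_m)$ of pairwise disjoint subsets of $[n]$ whose union is $[n]$. A mechanism $(A,p)$ over a set of instances $\mathcal{I}$ assigns to each $c\in\mathcal{I}$ an allocation $A(c)$ and payments $p(c)\in\mathbb{R}^m$ (written $A_i,p_i$). The mechanism is proportional if for every $c\in\mathcal{I}$ and $i\in[m]$: $c_i(A_i)-p_i\le \frac1m\sum_{j\in[m]}(c_i(A_j)-p_j)$. $\mathrm{OPT}(c)=\min_X\max_{i\in[m]}c_i(X_i)$ over all allocations $X$. An allocation function $A$ gives a $\beta$-approximation to the optimal makespan if $\max_{i}c_i(A(c)_i)\le\beta\,\mathrm{OPT}(c)$ for all $c\in\mathcal{I}$. *)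

From mathcomp Require Import all_boot all_order all_algebra.
From mathcomp Require Import reals.
Set Implicit Arguments. Unset Strict Implicit. Unset Printing Implicit Defensive.
Import Order.TTheory GRing.Theory Num.Theory.
Local Open Scope ring_scope.

Section Sched.
Variables (R : realType) (m n : nat).

(* An instance: c i j = cost of job j on machine i. *)
Definition instance := 'M[R]_(m, n).
Definition general_instance (c : instance) : Prop := forall i j, 0 <= c i j.

(* An allocation (X_1,..,X_m), pairwise disjoint, union [n], is encoded
   by the function sending each job to the machine it is assigned to;
   X_i = [set j | X j == i]. *)
Definition allocation := {ffun 'I_n -> 'I_m}.
Definition bundle (X : allocation) (i : 'I_m) : {set 'I_n} := [set j | X j == i].

Definition cost (c : instance) (i : 'I_m) (S : {set 'I_n}) : R :=
  \sum_(j in S) c i j.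

Definition makespan (c : instance) (X : allocation) : R :=
  \big[Num.max/0]_(i < m) cost c i (bundle X i).

Definition alloc_fun := instance -> allocation.
Definition pay_fun := instance -> 'I_m -> R.

Definition proportional (A : alloc_fun) (p : pay_fun) : Prop :=
  forall c, general_instance c -> forall i : 'I_m,
    cost c i (bundle (A c) i) - p c i <=
    m%:R^-1 * \sum_(k < m) (cost c i (bundle (A c) k) - p c k).

Definition OPT (c : instance) (X0 : allocation) : R :=
  \big[Num.min/makespan c X0]_(X : allocation) makespan c X.

Definition approximates (beta : R) (A : alloc_fun) : Prop :=
  forall c, general_instance c ->
    forall X0 : allocation, makespan c (A c) <= beta * OPT c X0.

End Sched.

(** On the instance with [c_i(i) = 1], [c_i(j) = 3/2 - eps/2] for [j < i] and
    [c_i(j) = 1/2 - eps/2] for [i < j] (on the first [m] jobs, the others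
    costing nothing), the diagonal allocation has makespan 1, and it is the
    only allocation of makespan at most [3/2 - eps]: by induction on [j],
    job [j] cannot go to a later machine (too expensive) nor to an earlier one
    (which already holds its own job).  So a [(3/2 - eps)]-approximate
    mechanism gives every machine cost 1.  Summing the proportionality
    inequalities over all machines the payments cancel, so the costs must add
    up to at most [1/m] of the total cost [m^2 - eps m (m - 1)/2]; but they add
    up to [m]. *)

From mathcomp Require Import all_boot all_order all_algebra.
From mathcomp Require Import reals.
From mathcomp Require Import lra.
Set Implicit Arguments. Unset Strict Implicit. Unset Printing Implicit Defensive.
Import Order.TTheory GRing.Theory Num.Theory.
Local Open Scope ring_scope.

Section Mechanisms.
Variables (R : realType) (m n : nat).
Implicit Types (c : instance R m n) (X : allocation m n).

Lemma sum_cost_bundles c X i :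
  \sum_(k < m) cost c i (bundle X k) = \sum_(j < n) c i j.
Proof.
rewrite (partition_big X predT) //=.
by apply: eq_bigr => k _; apply: eq_bigl => j; rewrite inE.
Qed.

Lemma entry_le_cost c X i j :
  general_instance c -> X j = i -> c i j <= cost c i (bundle X i).
Proof.
move=> cgen Xj; rewrite /cost (bigD1 j) ?inE ?Xj //= lerDl.
by apply: sumr_ge0 => k _; apply: cgen.
Qed.

Lemma entry2_le_cost c X i j k : general_instance c ->
  X j = i -> X k = i -> j != k -> c i j + c i k <= cost c i (bundle X i).
Proof.
move=> cgen Xj Xk jk; rewrite /cost (bigD1 j) ?inE ?Xj //= (bigD1 k) /=.
  by rewrite addrA lerDl; apply: sumr_ge0 => l _; apply: cgen.
by rewrite inE Xk eqxx eq_sym jk.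
Qed.

Lemma cost_le_makespan c X i : cost c i (bundle X i) <= makespan c X.
Proof. exact: (le_bigmax _ (fun k => cost c k (bundle X k))). Qed.

Lemma makespan_le c X (b : R) :
  0 <= b -> (forall i, cost c i (bundle X i) <= b) -> makespan c X <= b.
Proof.
move=> b_ge0 Xb; rewrite /makespan.
by elim/big_rec: _ => [|i x _ xb] //; rewrite ge_max Xb.
Qed.

Lemma OPT_le_makespan c X0 X : OPT c X0 <= makespan c X.
Proof. exact: bigmin_le. Qed.

Lemma approximates_cost_le (beta : R) (A : alloc_fun R m n) c X i :
  0 <= beta -> approximates beta A -> general_instance c ->
  cost c i (bundle (A c) i) <= beta * makespan c X.
Proof.
move=> beta_ge0 Aapprox cgen; apply: le_trans (cost_le_makespan _ _ _) _.
apply: le_trans (Aapprox c cgen X) _.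
by rewrite ler_wpM2l // OPT_le_makespan.
Qed.

Lemma proportional_sum_cost (A : alloc_fun R m n) (p : pay_fun R m n) c :
  (0 < m)%N -> proportional A p -> general_instance c ->
  \sum_(i < m) cost c i (bundle (A c) i) <=
    m%:R^-1 * \sum_(i < m) \sum_(j < n) c i j.
Proof.
move=> m_gt0 Aprop cgen.
have m_neq0 : m%:R != 0 :> R by rewrite pnatr_eq0 -lt0n.
have := @ler_sum _ _ (index_enum 'I_m) predT _ _ (fun i _ => Aprop c cgen i).
rewrite sumrB -mulr_sumr.
under [X in _ <= _ * X]eq_bigr do rewrite sumrB sum_cost_bundles.
rewrite sumrB sumr_const card_ord mulrBr -(mulr_natl (\sum_i p c i)) mulKf //.
by rewrite lerD2r.
Qed.

End Mechanisms.

Section HardInstance.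
Variables (R : realType) (m n : nat) (eps : R).
Hypotheses (Hn : (m <= n)%N) (eps_gt0 : 0 < eps) (eps_le1 : eps <= 1).
Implicit Types X : allocation m n.

Definition hard_entry (i j : nat) : R :=
  if i == j then 1 else if (j < i)%N then 3/2 - eps/2 else 1/2 - eps/2.

Definition hard_instance : instance R m n :=
  \matrix_(i, j) if (j < m)%N then hard_entry i j else 0.

Lemma hard_instance_widen (i j : 'I_m) :
  hard_instance i (widen_ord Hn j) = hard_entry i j.
Proof. by rewrite mxE /= ltn_ord. Qed.

Lemma hard_entry_ge0 i j : 0 <= hard_entry i j.
Proof.
have := eps_le1; rewrite /hard_entry.
by case: eqP => _; [|case: ltnP => _]; lra.
Qed.

Lemma hard_instance_general : general_instance hard_instance.
Proof. by move=> i j; rewrite mxE; case: ifP => // _; apply: hard_entry_ge0. Qed.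

Lemma hard_entry_sym (i j : nat) :
  hard_entry i j + hard_entry j i = 2 - eps + eps * (i == j)%:R.
Proof.
by rewrite /hard_entry; case: ltngtP => _; rewrite ?mulr0 ?mulr1; lra.
Qed.

Definition diagonal X := forall i : 'I_m, X (widen_ord Hn i) = i.

Lemma diagonal_of_cost_le X :
  (forall i, cost hard_instance i (bundle X i) <= 3/2 - eps) -> diagonal X.
Proof.
move=> Xcost [i im]; elim/ltn_ind: i im => i IH im.
set j := widen_ord Hn (Ordinal im).
have Xj_cost := Xcost (X j); have eps_pos := eps_gt0.
case: (ltngtP (X j) i) => [Xji|iXj|Xji]; [exfalso|exfalso|exact: val_inj].
- have Xk : X (widen_ord Hn (X j)) = X j.
    by case: (X j) Xji => k km ki; apply: IH.
  have kj : widen_ord Hn (X j) != j by rewrite -val_eqE /= ltn_eqF.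
  have := entry2_le_cost hard_instance_general Xk (erefl (X j)) kj.
  rewrite hard_instance_widen mxE /= im /hard_entry eqxx ltn_eqF //.
  by rewrite ltnNge (ltnW Xji) /=; lra.
- have := entry_le_cost hard_instance_general (erefl (X j)).
  by rewrite mxE /= im /hard_entry gtn_eqF // iXj; lra.
Qed.

Lemma diagonal_cost X i : diagonal X -> cost hard_instance i (bundle X i) = 1.
Proof.
move=> Xdiag; rewrite /cost (bigD1 (widen_ord Hn i)) ?inE ?Xdiag //=.
rewrite hard_instance_widen /hard_entry eqxx big1 ?addr0 // => j.
rewrite inE mxE => /andP[/eqP Xj]; case: ifP => // jm.
have jE : j = widen_ord Hn (Ordinal jm) by apply: val_inj.
by rewrite -Xj jE Xdiag eqxx.
Qed.

Definition diagonal_alloc (i0 : 'I_m) : allocation m n :=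
  [ffun j => insubd i0 (val j)].

Lemma diagonal_alloc_diagonal i0 : diagonal (diagonal_alloc i0).
Proof. by move=> i; apply: val_inj; rewrite ffunE val_insubd /= ltn_ord. Qed.

Lemma hard_total_lt : (2 <= m)%N ->
  \sum_(i < m) \sum_(j < n) hard_instance i j < m%:R ^+ 2.
Proof.
move=> m_ge2.
have -> : \sum_(i < m) \sum_(j < n) hard_instance i j =
          \sum_(i < m) \sum_(j < m) hard_entry i j.
  apply: eq_bigr => i _; rewrite (big_ord_widen _ (hard_entry i) Hn) [RHS]big_mkcond.
  by apply: eq_bigr => j _; rewrite mxE.
set S := \sum_(i < m) _.
have twiceS : S *+ 2 = (2 - eps) * m%:R ^+ 2 + eps * m%:R.
  rewrite mulr2n {2}/S exchange_big -big_split.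
  under eq_bigr => i _ do rewrite -big_split /=.
  under eq_bigr => i _ do under eq_bigr => j _ do rewrite hard_entry_sym.
  have row_sum (i : 'I_m) :
      \sum_(j < m) (2 - eps + eps * (i == j :> nat)%:R) = (2 - eps) * m%:R + eps.
    rewrite big_split sumr_const card_ord -[(2 - eps) *+ m]mulr_natr.
    rewrite (bigD1 i) //= eqxx mulr1.
    by rewrite big1 ?addr0 // => j; rewrite eq_sym val_eqE => /negbTE->; rewrite mulr0.
  rewrite (eq_bigr _ (fun i _ => row_sum i)) sumr_const card_ord.
  by rewrite -[(_ + eps) *+ m]mulr_natr mulrDl -mulrA -expr2.
have m_ge2R : 2 <= m%:R :> R by rewrite (ler_nat R 2).
have : 0 < eps * (m%:R * (m%:R - 1)) by rewrite !mulr_gt0 //; lra.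
move: twiceS m_ge2R; rewrite mulr2n; move: S (m%:R) => S M.
nra.
Qed.

End HardInstance.

Theorem theorem2 (R : realType) (m n : nat) (Hm : (2 <= m)%N) (Hn : (m <= n)%N)
  (eps : R) (Heps0 : 0 < eps) (Heps1 : eps <= 1 / 2) :
  ~ exists (A : alloc_fun R m n) (p : pay_fun R m n),
      proportional A p /\ approximates (3 / 2 - eps) A.
Proof.
move=> [A [p [Aprop Aapprox]]].
have m_gt0 : (0 < m)%N by apply: leq_trans Hm.
have eps_le1 : eps <= 1 by lra.
set c := hard_instance m n eps.
have cgen : general_instance c := hard_instance_general eps_le1.
have diag_makespan : makespan c (diagonal_alloc n (Ordinal m_gt0)) <= 1.
  apply: makespan_le => // i.
  by rewrite (diagonal_cost _ _ (diagonal_alloc_diagonal Hn _)).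
have Acost i : cost c i (bundle (A c) i) <= 3/2 - eps.
  have beta_gt0 : 0 < 3/2 - eps by lra.
  apply: le_trans (approximates_cost_le (diagonal_alloc n (Ordinal m_gt0)) i
                     (ltW beta_gt0) Aapprox cgen) _.
  by rewrite -[leRHS]mulr1 ler_pM2l.
have Adiag := diagonal_of_cost_le Hn Heps0 eps_le1 Acost.
have := proportional_sum_cost m_gt0 Aprop cgen.
rewrite (eq_bigr _ (fun i _ => diagonal_cost eps i Adiag)) sumr_const card_ord.
rewrite ler_pdivlMl ?ltr0n // -expr2 => total_ge.
by have := hard_total_lt Hn Heps0 Hm; rewrite ltNge total_ge.
Qed.
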